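(* Let $X$ be a perfect Polish space (i.e. without isolated points). For the generic compact set $K\subseteq X$ there is a continuous gauge function $h$ such that $0<\mathcal{H}^{h}(K)<\infty$.
   Context: $\mathcal{K}(X)$ denotes the set of non-empty compact subsets of $X$ with the Hausdorff metric $d_H(K_1,K_2)=\min\{r: K_1\subseteq B(K_2,r),\ K_2\subseteq B(K_1,r)\}$, where $B(A,r)=\{x: \operatorname{dist}(A,\{x\})\le r\}$. ''The generic compact set has property P'' means the set of $K\in\mathcal{K}(X)$ with property P is co-meager in $\mathcal{K}(X)$. A gauge function is a function $h\colon[0,\infty)\to[0,\infty)$ that is non-decreasing, right-continuous, and satisfies $h(x)=0$ iff $x=0$. For $A\subseteq X$, $\mathcal{H}^h_\delta(A)=\inf\{\sum_{i=1}^\infty h(\operatorname{diam}A_i): A\subseteq\bigcup_i A_i,\ \operatorname{diam}A_i\le\delta\}$ and $\mathcal{H}^h(A)=\lim_{\delta\to0+}\mathcal{H}^h_\delta(A)$. *)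

From Stdlib Require Import Reals Lra List Classical ClassicalEpsilon.
Open Scope R_scope.

Definition Rsup (E : R -> Prop) : R :=
  match excluded_middle_informative (bound E /\ exists x, E x) with
  | left H => proj1_sig (completeness E (proj1 H) (proj2 H))
  | right _ => 0
  end.

Definition Rinf (E : R -> Prop) : R := - Rsup (fun r => E (- r)).

Inductive ER : Type := Fin (r : R) | PInf.

Definition ER_le (a b : ER) : Prop :=
  match a, b with
  | Fin x, Fin y => x <= y
  | _, PInf => True
  | PInf, Fin _ => False
  end.

Definition ER_lt (a b : ER) : Prop :=
  match a, b with
  | Fin x, Fin y => x < y
  | Fin _, PInf => True
  | PInf, _ => False
  end.

Definition ER_add (a b : ER) : ER :=
  match a, b with
  | Fin x, Fin y => Fin (x + y)
  | _, _ => PInf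
  end.

Definition ER_sup (S : ER -> Prop) : ER :=
  match excluded_middle_informative (S PInf \/ ~ bound (fun r => S (Fin r))) with
  | left _ => PInf
  | right _ => Fin (Rsup (fun r => S (Fin r)))
  end.

(* infimum of a set of extended reals (used for sets of non-negative values);
   the infimum of the empty set is +oo *)
Definition ER_inf (S : ER -> Prop) : ER :=
  match excluded_middle_informative (exists r, S (Fin r)) with
  | left _ => Fin (Rinf (fun r => S (Fin r)))
  | right _ => PInf
  end.

Fixpoint ER_psum (f : nat -> ER) (n : nat) : ER :=
  match n with
  | O => f O
  | S m => ER_add (ER_psum f m) (f (S m))
  end.

Definition ER_series (f : nat -> ER) : ER :=
  ER_sup (fun v => exists n, v = ER_psum f n).

Record MetricSpace : Type := {
  pt :> Type;
  dist : pt -> pt -> R;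
  dist_eq0 : forall x y, dist x y = 0 <-> x = y;
  dist_sym : forall x y, dist x y = dist y x;
  dist_tri : forall x y z, dist x z <= dist x y + dist y z
}.

Arguments dist {m} _ _.

Section Metric.
Variable X : MetricSpace.

Definition complete_space : Prop :=
  forall u : nat -> X,
    (forall eps, 0 < eps -> exists N, forall n m, (n >= N)%nat -> (m >= N)%nat ->
        dist (u n) (u m) < eps) ->
    exists l : X, forall eps, 0 < eps -> exists N, forall n, (n >= N)%nat ->
        dist (u n) l < eps.

Definition separable_space : Prop :=
  exists s : nat -> X, forall x eps, 0 < eps -> exists n, dist x (s n) < eps.

Definition polish_space : Prop := complete_space /\ separable_space.

Definition perfect_space : Prop :=
  forall (x : X) eps, 0 < eps -> exists y, y <> x /\ dist x y < eps.

Definition open_set (U : X -> Prop) : Prop :=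
  forall x, U x -> exists eps, 0 < eps /\ forall y, dist x y < eps -> U y.

Definition compact_set (K : X -> Prop) : Prop :=
  forall (I : Type) (U : I -> X -> Prop),
    (forall i, open_set (U i)) ->
    (forall x, K x -> exists i, U i x) ->
    exists l : list I, forall x, K x -> exists i, In i l /\ U i x.

Definition KX : Type := { K : X -> Prop | (exists x, K x) /\ compact_set K }.

Definition dist_set (A : X -> Prop) (x : X) : R :=
  Rinf (fun r => exists a, A a /\ r = dist a x).

Definition Bset (A : X -> Prop) (r : R) : X -> Prop :=
  fun x => dist_set A x <= r.

Definition incl (A B : X -> Prop) : Prop := forall x, A x -> B x.

(* Hausdorff metric; for non-empty compact sets the infimum is a minimum *)
Definition dH (K1 K2 : KX) : R :=
  Rinf (fun r => incl (proj1_sig K1) (Bset (proj1_sig K2) r)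
              /\ incl (proj1_sig K2) (Bset (proj1_sig K1) r)).

(* diameter, in [0, +oo] (diam of empty set = 0) *)
Definition diam (A : X -> Prop) : ER :=
  let D := fun r => exists x y, A x /\ A y /\ r = dist x y in
  match excluded_middle_informative (exists x, A x) with
  | left _ =>
      match excluded_middle_informative (bound D) with
      | left _ => Fin (Rsup D)
      | right _ => PInf
      end
  | right _ => Fin 0
  end.

Definition ER_app (h : R -> R) (v : ER) : ER :=
  match v with Fin d => Fin (h d) | PInf => PInf end.

Definition Hh_delta (h : R -> R) (delta : R) (A : X -> Prop) : ER :=
  ER_inf (fun v => exists C : nat -> X -> Prop,
            (forall x, A x -> exists i, C i x) /\
            (forall i, ER_le (diam (C i)) (Fin delta)) /\
            v = ER_series (fun i => ER_app h (diam (C i)))).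

(* H^h(A) = lim_{delta -> 0+} H^h_delta(A); as H^h_delta(A) is non-increasing
   in delta, this limit is the supremum over delta > 0 *)
Definition Hh (h : R -> R) (A : X -> Prop) : ER :=
  ER_sup (fun v => exists delta, 0 < delta /\ v = Hh_delta h delta A).

End Metric.

Arguments KX : clear implicits.

Section Baire.
Variables (T : Type) (d : T -> T -> R).

Definition closure_d (N : T -> Prop) : T -> Prop :=
  fun x => forall eps, 0 < eps -> exists y, N y /\ d x y < eps.

Definition interior_d (C : T -> Prop) : T -> Prop :=
  fun x => exists eps, 0 < eps /\ forall y, d x y < eps -> C y.

Definition nowhere_dense_d (N : T -> Prop) : Prop :=
  forall x, ~ interior_d (closure_d N) x.

Definition meager_d (M : T -> Prop) : Prop :=
  exists N : nat -> T -> Prop, (forall n, nowhere_dense_d (N n)) /\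
    (forall x, M x -> exists n, N n x).

Definition comeager_d (S : T -> Prop) : Prop := meager_d (fun x => ~ S x).
End Baire.

Definition generic_compact (X : MetricSpace) (P : (X -> Prop) -> Prop) : Prop :=
  comeager_d (KX X) (dH X) (fun K => P (proj1_sig K)).

Definition gauge (h : R -> R) : Prop :=
  (forall x, 0 <= x -> 0 <= h x) /\
  (forall x y, 0 <= x -> x <= y -> h x <= h y) /\
  (forall x, 0 <= x -> forall eps, 0 < eps -> exists delta, 0 < delta /\
      forall y, x <= y < x + delta -> Rabs (h y - h x) < eps) /\
  (forall x, 0 <= x -> (h x = 0 <-> x = 0)).

Definition continuous_nonneg (h : R -> R) : Prop :=
  forall x, 0 <= x -> forall eps, 0 < eps -> exists delta, 0 < delta /\
    forall y, 0 <= y -> Rabs (y - x) < delta -> Rabs (h y - h x) < eps.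

(* Call a finite list l a cluster net of K at scale s when its points are
   pairwise at distance >= 2s, K lies within s/8 of l and l within s/8 of K;
   a finer net l' refines l evenly with multiplicity m when every centre of
   l has exactly m points of l' within s/2.  Two kinds of compact sets are
   nowhere dense in the Hausdorff metric: those with no cluster net at any
   dyadic scale, and those with a net at scale 2^-k admitting no even
   refinement with m >= 2 at a finer dyadic scale (perfectness lets us add
   points near a net to equalise the cluster sizes).  A generic K therefore
   carries a tower of nets L_n at scales T_n with |L_(n+1)| = m_n |L_n|: it
   looks like a homogeneous Cantor set.  With the weights w_n = 1/|L_n| we
   build a continuous gauge h with h <= w_n on [0, T_n/4] and h >= w_n on
   [T_(n+1), oo).  Covering K by the clusters of level n gives H^h(K) <= 1;
   conversely every cover has h-mass >= 1, by enlarging its sets into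
   clusters, extracting a finite subcover and counting descendants.
   General facts (metric spaces, counting, Hausdorff measures) come first,
   then cluster nets, nowhere density, the tower and its gauge. *)

From Stdlib Require Import Reals Lra Lia List Classical ClassicalEpsilon ZArith.
Open Scope R_scope.

Lemma Rsup_spec (E : R -> Prop) : bound E -> (exists x, E x) -> is_lub E (Rsup E).
Proof.
  intros Hb He. unfold Rsup.
  destruct (excluded_middle_informative (bound E /\ exists x, E x)) as [H|H].
  - exact (proj2_sig (completeness E (proj1 H) (proj2 H))).
  - exfalso; tauto.
Qed.

Lemma Rsup_ub (E : R -> Prop) x : bound E -> E x -> x <= Rsup E.
Proof. intros Hb Hx. apply (Rsup_spec E Hb (ex_intro _ x Hx)), Hx. Qed.

Lemma Rsup_le (E : R -> Prop) b : (exists x, E x) -> (forall x, E x -> x <= b) -> Rsup E <= b.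
Proof.
  intros He Hb. assert (Hbd : bound E) by (exists b; exact Hb).
  apply (Rsup_spec E Hbd He). exact Hb.
Qed.

Lemma Rinf_lb (E : R -> Prop) x : (exists m, forall y, E y -> m <= y) -> E x -> Rinf E <= x.
Proof.
  intros [m Hm] Hx. unfold Rinf.
  assert (H : - x <= Rsup (fun r => E (- r))).
  { apply Rsup_ub.
    - exists (- m). intros r Hr. specialize (Hm _ Hr). lra.
    - rewrite Ropp_involutive; exact Hx. }
  lra.
Qed.

Lemma Rinf_ge (E : R -> Prop) b : (exists x, E x) -> (forall y, E y -> b <= y) -> b <= Rinf E.
Proof.
  intros [x Hx] Hb. unfold Rinf.
  assert (H : Rsup (fun r => E (- r)) <= - b).
  { apply Rsup_le.
    - exists (- x). rewrite Ropp_involutive; exact Hx.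
    - intros r Hr. specialize (Hb _ Hr). lra. }
  lra.
Qed.

Lemma Rinf_lt (E : R -> Prop) r : (exists m, forall y, E y -> m <= y) -> (exists x, E x) ->
  Rinf E < r -> exists x, E x /\ x < r.
Proof.
  intros Hm He Hlt. apply NNPP; intro Hn.
  assert (r <= Rinf E); [|lra].
  apply Rinf_ge; auto. intros y Hy. apply Rnot_lt_le. intro. apply Hn. eauto.
Qed.

Lemma nowhere_dense_crit (T : Type) (d : T -> T -> R) (N : T -> Prop) :
  (forall x eps, 0 < eps -> exists y eta,
      d x y < eps /\ 0 < eta /\ forall z, d y z < eta -> ~ N z) ->
  nowhere_dense_d T d N.
Proof.
  intros H x [eps [Heps Hint]]. destruct (H x eps Heps) as [y [eta [H1 [H2 H3]]]].
  destruct (Hint y H1 eta H2) as [z [Hz Hd]]. exact (H3 z Hd Hz).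
Qed.

Notation KS K := (proj1_sig K).

Section Metric.
Variable X : MetricSpace.

Lemma dist_refl (x : X) : dist x x = 0.
Proof. apply dist_eq0. reflexivity. Qed.

Lemma dist_pos (x y : X) : 0 <= dist x y.
Proof.
  pose proof (dist_tri X x y x) as H. rewrite dist_refl, (dist_sym X y x) in H. lra.
Qed.

Lemma dist_pos_neq (x y : X) : x <> y -> 0 < dist x y.
Proof.
  intro Hne. destruct (dist_pos x y) as [H|H]; auto.
  exfalso. apply Hne, dist_eq0. auto.
Qed.

Definition Xdec (x y : X) : {x = y} + {x <> y} := excluded_middle_informative (x = y).

Lemma dist_set_le (A : X -> Prop) x a : A a -> dist_set X A x <= dist a x.
Proof.
  intro Ha. apply Rinf_lb.
  - exists 0. intros y [b [_ ->]]. apply dist_pos.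
  - eauto.
Qed.

Lemma dist_set_ge0 (A : X -> Prop) x : (exists a, A a) -> 0 <= dist_set X A x.
Proof.
  intros [a Ha]. apply Rinf_ge.
  - exists (dist a x). eauto.
  - intros y [b [_ ->]]. apply dist_pos.
Qed.

Lemma dist_set_lt (A : X -> Prop) x r : (exists a, A a) -> dist_set X A x < r ->
  exists a, A a /\ dist a x < r.
Proof.
  intros [a0 Ha0] H. apply Rinf_lt in H.
  - destruct H as [y [[b [Hb ->]] Hy]]. eauto.
  - exists 0. intros y [b [_ ->]]. apply dist_pos.
  - exists (dist a0 x). eauto.
Qed.

(* Compact sets are bounded: cover by the balls B(x0, n). *)
Lemma compact_bounded (K : X -> Prop) x0 : compact_set X K ->
  exists B, forall x, K x -> dist x0 x <= B.
Proof.
  intro Hc.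
  destruct (Hc nat (fun n x => dist x0 x < INR n)) as [l Hl].
  - intros n x Hx. exists (INR n - dist x0 x). split; [lra|].
    intros y Hy. pose proof (dist_tri X x0 x y). lra.
  - intros x _. destruct (archimed (dist x0 x)) as [H1 _].
    exists (Z.to_nat (up (dist x0 x))). rewrite INR_IZR_INZ, Z2Nat.id; [lra|].
    apply le_IZR. pose proof (dist_pos x0 x). lra.
  - exists (fold_right (fun n acc => Rmax (INR n) acc) 0 l).
    intros x Hx. destruct (Hl x Hx) as [i [Hi Hd]].
    enough (INR i <= fold_right (fun n acc => Rmax (INR n) acc) 0 l) by lra.
    clear -Hi. induction l as [|a l IH]; simpl in *; [contradiction|].
    destruct Hi as [->|Hi]; [apply Rmax_l|].
    eapply Rle_trans; [apply IH, Hi|apply Rmax_r].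
Qed.

Lemma KS_ne (K : KX X) : exists x, KS K x.
Proof. exact (proj1 (proj2_sig K)). Qed.

Lemma KS_cpt (K : KX X) : compact_set X (KS K).
Proof. exact (proj2 (proj2_sig K)). Qed.

Definition dH_radii (K1 K2 : KX X) : R -> Prop := fun r =>
  incl X (KS K1) (Bset X (KS K2) r) /\ incl X (KS K2) (Bset X (KS K1) r).

Lemma dH_radii_lb (K1 K2 : KX X) : exists m, forall y, dH_radii K1 K2 y -> m <= y.
Proof.
  exists 0. intros r [H1 _]. destruct (KS_ne K1) as [x Hx].
  specialize (H1 x Hx). unfold Bset in H1.
  pose proof (dist_set_ge0 (KS K2) x (KS_ne K2)). lra.
Qed.

Lemma dH_radii_ne (K1 K2 : KX X) : exists r, dH_radii K1 K2 r.
Proof.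
  destruct (KS_ne K1) as [x1 H1], (KS_ne K2) as [x2 H2].
  destruct (compact_bounded _ x1 (KS_cpt K1)) as [B1 HB1].
  destruct (compact_bounded _ x2 (KS_cpt K2)) as [B2 HB2].
  pose proof (HB1 x1 H1). pose proof (HB2 x2 H2).
  pose proof (dist_refl x1). pose proof (dist_refl x2).
  exists (B1 + B2 + dist x1 x2). split; intros x Hx; unfold Bset.
  - eapply Rle_trans; [apply (dist_set_le _ x x2 H2)|].
    pose proof (HB1 x Hx). pose proof (dist_tri X x2 x1 x).
    pose proof (dist_sym X x2 x1). lra.
  - eapply Rle_trans; [apply (dist_set_le _ x x1 H1)|].
    pose proof (HB2 x Hx). pose proof (dist_tri X x1 x2 x). lra.
Qed.

Lemma dH_lt (K1 K2 : KX X) r : dH X K1 K2 < r ->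
  (forall x, KS K1 x -> exists y, KS K2 y /\ dist y x < r) /\
  (forall y, KS K2 y -> exists x, KS K1 x /\ dist x y < r).
Proof.
  intro H. apply Rinf_lt in H; [|apply dH_radii_lb|apply dH_radii_ne].
  destruct H as [r' [[H1 H2] Hr']].
  split; intros x Hx; apply dist_set_lt; try apply KS_ne.
  - specialize (H1 x Hx). unfold Bset in H1. lra.
  - specialize (H2 x Hx). unfold Bset in H2. lra.
Qed.

Lemma dH_le (K1 K2 : KX X) r :
  (forall x, KS K1 x -> exists y, KS K2 y /\ dist y x <= r) ->
  (forall y, KS K2 y -> exists x, KS K1 x /\ dist x y <= r) -> dH X K1 K2 <= r.
Proof.
  intros H1 H2. apply Rinf_lb; [apply dH_radii_lb|split].
  - intros x Hx. destruct (H1 x Hx) as [y [Hy Hd]].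
    eapply Rle_trans; [apply dist_set_le|]; eauto.
  - intros x Hx. destruct (H2 x Hx) as [y [Hy Hd]].
    eapply Rle_trans; [apply dist_set_le|]; eauto.
Qed.

Lemma dH_refl (K : KX X) : dH X K K <= 0.
Proof. apply dH_le; intros x Hx; exists x; rewrite dist_refl; split; auto; lra. Qed.

Lemma dH_trans_le (K1 K2 F : KX X) a rho : dH X K1 K2 < a ->
  (forall x, KS K2 x -> exists p, KS F p /\ dist p x <= rho) ->
  (forall p, KS F p -> exists x, KS K2 x /\ dist x p <= rho) ->
  dH X K1 F <= a + rho.
Proof.
  intros Ha HF1 HF2. destruct (dH_lt _ _ _ Ha) as [H1 H2]. apply dH_le.
  - intros x Hx. destruct (H1 x Hx) as [w [Hw Hdw]]. destruct (HF1 w Hw) as [q [Hq Hdq]].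
    exists q. split; auto. pose proof (dist_tri X q w x). lra.
  - intros q Hq. destruct (HF2 q Hq) as [w [Hw Hdw]]. destruct (H2 w Hw) as [x [Hx Hdx]].
    exists x. split; auto. pose proof (dist_tri X x w q). lra.
Qed.

Lemma list_compact (l : list X) : compact_set X (fun x => In x l).
Proof.
  intros I U _ Hcov. induction l as [|a l IH].
  - exists nil. intros x [].
  - destruct IH as [li Hli]; [intros x Hx; apply Hcov; right; auto|].
    destruct (Hcov a (or_introl eq_refl)) as [i Hi].
    exists (i :: li). intros x [<-|Hx].
    + exists i; split; auto. left; auto.
    + destruct (Hli x Hx) as [j [Hj Hj']]. exists j; split; auto. right; auto.
Qed.

Definition list_KX (l : list X) (a : X) (Ha : In a l) : KX X :=
  exist _ (fun x => In x l) (conj (ex_intro _ a Ha) (list_compact l)).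

Lemma finite_net (K : X -> Prop) rho : compact_set X K -> 0 < rho ->
  exists l, NoDup l /\ (forall p, In p l -> K p) /\
            (forall x, K x -> exists p, In p l /\ dist p x < rho).
Proof.
  intros Hc Hr.
  destruct (Hc X (fun i z => K i /\ dist i z < rho)) as [li Hli].
  - intros i x [Hi Hd]. exists (rho - dist i x). split; [lra|].
    intros y Hy. split; auto. pose proof (dist_tri X i x y). lra.
  - intros x Hx. exists x. rewrite dist_refl. auto.
  - set (inK := fun i => if excluded_middle_informative (K i) then true else false).
    exists (nodup Xdec (filter inK li)). split; [apply NoDup_nodup|split].
    + intros p Hp. apply nodup_In, filter_In in Hp. destruct Hp as [_ Hp].
      unfold inK in Hp. destruct (excluded_middle_informative (K p)); auto; discriminate.
    + intros x Hx. destruct (Hli x Hx) as [i [Hi [Ki Hd]]]. exists i. split; auto.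
      apply nodup_In, filter_In. split; auto.
      unfold inK. destruct (excluded_middle_informative (K i)); auto.
Qed.

Lemma min_sep (l : list X) : exists d, 0 < d /\
  forall a b, In a l -> In b l -> a <> b -> d <= dist a b.
Proof.
  assert (Hone : forall a (l : list X), exists d, 0 < d /\
            forall b, In b l -> a <> b -> d <= dist a b).
  { intros a l0. induction l0 as [|c l0 IH].
    - exists 1. split; [lra|]. intros b [].
    - destruct IH as [d [Hd H]]. destruct (Xdec a c) as [->|Hac].
      + exists d. split; auto. intros b [<-|Hb] Hne; [contradiction|auto].
      + pose proof (dist_pos_neq a c Hac).
        exists (Rmin d (dist a c)). split; [apply Rmin_pos; auto|].
        intros b [<-|Hb] Hne; [apply Rmin_r|].
        eapply Rle_trans; [apply Rmin_l|auto]. }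
  induction l as [|a l IH].
  - exists 1. split; [lra|]. intros a b [].
  - destruct IH as [d [Hd H]]. destruct (Hone a l) as [d' [Hd' H']].
    exists (Rmin d d'). split; [apply Rmin_pos; auto|].
    pose proof (Rmin_l d d'). pose proof (Rmin_r d d').
    intros x y [<-|Hx] [<-|Hy] Hne.
    + contradiction.
    + specialize (H' y Hy Hne). lra.
    + rewrite dist_sym. specialize (H' x Hx (not_eq_sym Hne)). lra.
    + specialize (H x y Hx Hy Hne). lra.
Qed.

End Metric.

Arguments dist_refl {X} x.
Arguments dist_pos {X} x y.
Arguments dist_pos_neq {X} x y.
Arguments KS_ne {X} K.
Arguments KS_cpt {X} K.
Arguments dH_lt {X} K1 K2 r.
Arguments dH_le {X} K1 K2 r.
Arguments dH_refl {X} K.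
Arguments dH_trans_le {X} K1 K2 F a rho.

Lemma sum_ge_term (g : nat -> R) n i :
  (forall j, 0 <= g j) -> (i <= n)%nat -> g i <= sum_f_R0 g n.
Proof.
  intros Hg. induction n; intro Hi.
  - replace i with 0%nat by lia. simpl. lra.
  - simpl. destruct (Nat.eq_dec i (S n)) as [->|Hne].
    + pose proof (cond_pos_sum g n Hg). lra.
    + pose proof (IHn ltac:(lia)). pose proof (Hg (S n)). lra.
Qed.

Lemma geo_sum n : sum_f_R0 (fun i => (/2)^(S i)) n = 1 - (/2)^(S n).
Proof.
  induction n; [simpl; lra|].
  change (sum_f_R0 (fun i => (/2)^(S i)) n + (/2)^(S (S n)) = 1 - (/2)^(S (S n))).
  rewrite IHn. simpl. lra.
Qed.

Lemma least_ex (P : nat -> Prop) :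
  (exists n, P n) -> exists n, P n /\ forall m, (m < n)%nat -> ~ P m.
Proof.
  intros [n Hn]. apply NNPP. intro Hno.
  assert (H : forall k m, (m <= k)%nat -> ~ P m).
  { induction k; intros m Hm Hp.
    - apply Hno. exists m. split; auto. intros. lia.
    - destruct (Nat.eq_dec m (S k)) as [->|Hne]; [|apply (IHk m); auto; lia].
      apply Hno. exists (S k). split; auto. intros m' Hm'. apply IHk. lia. }
  exact (H n n (le_n n) Hn).
Qed.

Section Counting.
Variable A : Type.

Lemma filter_none (P : A -> bool) (l : list A) :
  (forall q, In q l -> P q = false) -> filter P l = nil.
Proof.
  induction l as [|a l IH]; intro H; simpl; auto.
  rewrite (H a (or_introl eq_refl)). apply IH. intros q Hq. apply H. right; auto.
Qed.

Lemma count_one (P : A -> bool) (l : list A) c : NoDup l -> In c l ->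
  (forall q, In q l -> (P q = true <-> q = c)) -> length (filter P l) = 1%nat.
Proof.
  induction l as [|a l IH]; intros Hnd Hc HP; [destruct Hc|].
  inversion Hnd; subst. simpl. destruct Hc as [<-|Hc].
  - assert (Hpa : P a = true) by (apply HP; simpl; auto). rewrite Hpa. simpl.
    rewrite filter_none; auto. intros q Hq. destruct (P q) eqn:E; auto.
    apply HP in E; [subst; contradiction|right; auto].
  - assert (Hpa : P a = false).
    { destruct (P a) eqn:E; auto. apply HP in E; [subst; contradiction|left; auto]. }
    rewrite Hpa. apply IH; auto. intros q Hq. apply HP. right; auto.
Qed.

Lemma list_max_ge (f : A -> nat) (l : list A) b c :
  In c l -> (f c <= fold_right (fun a acc => max (f a) acc) b l)%nat.
Proof.
  induction l as [|a l IH]; simpl; intros H; [destruct H|].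
  destruct H as [<-|H]; [lia|]. specialize (IH H). lia.
Qed.

Lemma list_max_ge_init (f : A -> nat) (l : list A) b :
  (b <= fold_right (fun a acc => max (f a) acc) b l)%nat.
Proof. induction l as [|a l IH]; simpl; lia. Qed.

Lemma list_sum_const (l : list A) k : list_sum (map (fun _ => k) l) = (length l * k)%nat.
Proof. induction l; simpl; lia. Qed.

Lemma list_sum_zero (l : list A) (f : A -> nat) :
  (forall a, In a l -> f a = 0%nat) -> list_sum (map f l) = 0%nat.
Proof. induction l as [|a l IH]; simpl; intros H; auto. rewrite H, IH; auto. Qed.

Lemma list_sum_plus (l : list A) (f g : A -> nat) :
  list_sum (map (fun a => f a + g a)%nat l) = (list_sum (map f l) + list_sum (map g l))%nat.
Proof. induction l as [|a l IH]; simpl; lia. Qed.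

Lemma sum_indicator_unique (l : list A) (f P' : A -> bool) (pb : bool) :
  length (filter f l) = 1%nat -> (forall a, In a l -> f a = true -> P' a = pb) ->
  list_sum (map (fun a => if f a then 1%nat else 0%nat) (filter P' l)) =
  if pb then 1%nat else 0%nat.
Proof.
  induction l as [|a l IH]; simpl; intros H1 H2; [discriminate|].
  destruct (f a) eqn:Ef.
  - simpl in H1. injection H1 as H1.
    assert (Hz : forall b, In b l -> f b = false).
    { intros b Hb. destruct (f b) eqn:E; auto. exfalso.
      assert (In b (filter f l)) by (apply filter_In; auto).
      destruct (filter f l); [destruct H|discriminate]. }
    assert (Hsum : list_sum (map (fun a0 => if f a0 then 1%nat else 0%nat) (filter P' l)) = 0%nat).
    { apply list_sum_zero. intros b Hb. apply filter_In in Hb. rewrite Hz; tauto. }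
    rewrite (H2 a (or_introl eq_refl) Ef). destruct pb; simpl; try rewrite Ef; lia.
  - destruct (P' a); simpl; [rewrite Ef; simpl|]; apply IH; auto.
Qed.

Lemma count_by_parents (l l'' : list A) (near : A -> A -> bool) (P P' : A -> bool) :
  (forall b, In b l'' -> length (filter (fun a => near a b) l) = 1%nat) ->
  (forall a b, In a l -> In b l'' -> near a b = true -> P b = P' a) ->
  length (filter P l'') = list_sum (map (fun a => length (filter (near a) l'')) (filter P' l)).
Proof.
  induction l'' as [|b l'' IH]; intros H1 H2.
  - simpl. rewrite list_sum_zero; auto.
  - simpl.
    rewrite (map_ext (fun a => length (if near a b then b :: filter (near a) l'' else filter (near a) l''))
      (fun a => ((if near a b then 1 else 0) + length (filter (near a) l''))%nat))
      by (intro a; destruct (near a b); reflexivity).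
    rewrite list_sum_plus, <- IH.
    + rewrite (sum_indicator_unique l (fun a => near a b) P' (P b)).
      * destruct (P b); reflexivity.
      * apply H1; left; auto.
      * intros a Ha Hn. symmetry. apply H2; auto. left; auto.
    + intros b' Hb'. apply H1; right; auto.
    + intros a b' Ha Hb' Hn. apply H2; auto. right; auto.
Qed.

Lemma count_cover (l : list A) (P : nat -> A -> bool) n :
  (forall b, In b l -> exists i, (i <= n)%nat /\ P i b = true) ->
  INR (length l) <= sum_f_R0 (fun i => INR (length (filter (P i) l))) n.
Proof.
  induction l as [|b l IH]; intro H.
  - apply cond_pos_sum. intros. apply pos_INR.
  - rewrite (sum_eq _ (fun i => INR (length (filter (P i) l)) + (if P i b then 1 else 0))).
    + rewrite plus_sum. simpl length. rewrite S_INR.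
      assert (H1 : INR (length l) <= sum_f_R0 (fun i => INR (length (filter (P i) l))) n)
        by (apply IH; intros b' Hb'; apply H; right; auto).
      destruct (H b (or_introl eq_refl)) as [i0 [Hi0 Hp]].
      assert (Hind : forall j, 0 <= (if P j b then 1 else 0)) by (intro j; destruct (P j b); lra).
      pose proof (sum_ge_term (fun i => if P i b then 1 else 0) n i0 Hind Hi0) as Hge.
      simpl in Hge. rewrite Hp in Hge. lra.
    + intros i _. simpl. destruct (P i b); simpl length; try rewrite S_INR; lra.
Qed.

End Counting.

Definition dyadic (k : nat) : R := (/2)^k.

Lemma dyadic_pos k : 0 < dyadic k.
Proof. unfold dyadic. apply pow_lt. lra. Qed.

Lemma dyadic_S k : dyadic (S k) = dyadic k / 2.
Proof. unfold dyadic. simpl. lra. Qed.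

Lemma dyadic_anti k k' : (k <= k')%nat -> dyadic k' <= dyadic k.
Proof. induction 1; [lra|]. rewrite dyadic_S. pose proof (dyadic_pos m). lra. Qed.

Lemma dyadic_lt k k' : (k < k')%nat -> dyadic k' <= dyadic k / 2.
Proof. intro H. rewrite <- dyadic_S. apply dyadic_anti. lia. Qed.

Lemma dyadic_small (a : R) (k0 : nat) : 0 < a -> exists k, (k0 < k)%nat /\ dyadic k < a.
Proof.
  intro Ha.
  destruct (pow_lt_1_zero (/2) ltac:(rewrite Rabs_pos_eq; lra) a Ha) as [N HN].
  exists (S (max k0 N)). split; [lia|].
  specialize (HN (S (max k0 N)) ltac:(lia)).
  rewrite Rabs_pos_eq in HN by (apply pow_le; lra). exact HN.
Qed.

Section Clusters.
Variable X : MetricSpace.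

Definition separated (s : R) (l : list X) : Prop :=
  forall c c', In c l -> In c' l -> c <> c' -> 2*s <= dist c c'.

Definition cluster_net (K : X -> Prop) (s : R) (l : list X) : Prop :=
  NoDup l /\ (forall x, K x -> exists c, In c l /\ dist x c < s/8) /\
  (forall c, In c l -> exists x, K x /\ dist x c < s/8) /\ separated s l.

Definition near (s : R) (c q : X) : bool :=
  if Rlt_dec (dist q c) (s/2) then true else false.

Lemma near_true s c q : near s c q = true <-> dist q c < s/2.
Proof. unfold near. destruct (Rlt_dec (dist q c) (s/2)); split; intro; auto; discriminate. Qed.

Lemma near_false s c q : near s c q = false <-> ~ dist q c < s/2.
Proof.
  unfold near. destruct (Rlt_dec (dist q c) (s/2)); split; intro;
    auto; try discriminate; contradiction.
Qed.

Lemma near_iff_center s l c c1 q : separated s l -> In c l -> In c1 l ->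
  dist q c1 < s/2 -> (near s c q = true <-> c = c1).
Proof.
  intros Hsep Hc Hc1 Hq. rewrite near_true. split.
  - intro Hlt. apply NNPP; intro Hne. specialize (Hsep c c1 Hc Hc1 Hne).
    pose proof (dist_tri X c q c1). pose proof (dist_sym X c q).
    pose proof (dist_pos q c1). lra.
  - intros ->. exact Hq.
Qed.

Lemma near_moved_center s l c0 c cq q a b : separated s l -> In c0 l -> In cq l ->
  dist q cq < a -> dist c0 c < b -> a + b <= s/2 -> near s c q = near s c0 q.
Proof.
  intros Hsep Hc0 Hcq Hq Hc Hab. pose proof (dist_pos q cq). pose proof (dist_pos c0 c).
  pose proof (dist_tri X q c0 c). pose proof (dist_tri X cq q c0).
  pose proof (dist_tri X q c c0). pose proof (dist_sym X cq q). pose proof (dist_sym X c c0).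
  destruct (Xdec X cq c0) as [<-|Hne].
  - transitivity true; [|symmetry]; apply near_true; lra.
  - specialize (Hsep cq c0 Hcq Hc0 Hne).
    transitivity false; [|symmetry]; apply near_false; lra.
Qed.

Definition even_refinement (s : R) (l l' : list X) (m : nat) : Prop :=
  forall c, In c l -> length (filter (near s c) l') = m.

Definition even_refinable (K : X -> Prop) (k : nat) (l : list X) : Prop :=
  exists k' l' m, (k < k')%nat /\ (2 <= m)%nat /\
    cluster_net K (dyadic k') l' /\ even_refinement (dyadic k) l l' m.

Lemma same_center K s l x x' c c' : cluster_net K s l -> dist x x' < s ->
  In c l -> In c' l -> dist x c < s/8 -> dist x' c' < s/8 -> c = c'.
Proof.
  intros [_ [_ [_ Hs]]] Hxx Hc Hc' H1 H2. apply NNPP; intro Hne.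
  specialize (Hs c c' Hc Hc' Hne).
  pose proof (dist_tri X c x c'). pose proof (dist_tri X x x' c').
  pose proof (dist_sym X c x). pose proof (dist_pos x x'). lra.
Qed.

Lemma unique_center K s l x q : cluster_net K s l -> K x -> dist x q < 3*s/8 ->
  exists c0, In c0 l /\ dist x c0 < s/8 /\
    forall c, In c l -> (near s c q = true <-> c = c0).
Proof.
  intros [_ [H1 [_ Hsep]]] Hx Hq.
  destruct (H1 x Hx) as [c0 [Hc0 Hd]]. exists c0. split; [auto|split; [auto|]].
  intros c Hc. apply (near_iff_center s l); auto.
  pose proof (dist_tri X q x c0). pose proof (dist_sym X q x). lra.
Qed.

End Clusters.

(* In a perfect space every ball contains points outside any finite list;
   this lets us add points to a net so that all clusters have equal size. *)
Section Perfect.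
Variable X : MetricSpace.
Hypothesis Hperf : perfect_space X.

Lemma fresh_point (p0 : X) r (A : list X) : 0 < r ->
  exists q, ~ In q A /\ dist p0 q < r.
Proof.
  intro Hr.
  assert (H : exists r', 0 < r' /\ forall q, q <> p0 -> dist p0 q < r' -> ~ In q A).
  { induction A as [|a A IH].
    - exists 1. split; [lra|]. intros q _ _ [].
    - destruct IH as [r' [Hr' H]]. destruct (Xdec X a p0) as [->|Hne].
      + exists r'. split; auto. intros q Hq Hd [->|HA]; [contradiction|eapply H; eauto].
      + pose proof (dist_pos_neq p0 a (not_eq_sym Hne)).
        exists (Rmin r' (dist p0 a)). split; [apply Rmin_pos; auto|].
        pose proof (Rmin_l r' (dist p0 a)). pose proof (Rmin_r r' (dist p0 a)).
        intros q Hq Hd [->|HA]; [lra|]. eapply H; eauto; lra. }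
  destruct H as [r' [Hr' H]].
  destruct (Hperf p0 (Rmin r r') (Rmin_pos _ _ Hr Hr')) as [q [Hq Hd]].
  pose proof (Rmin_l r r'). pose proof (Rmin_r r r').
  exists q. split; [apply H; auto; lra|lra].
Qed.

Lemma fresh_points (p0 : X) r n (E : list X) : 0 < r -> NoDup E ->
  exists Q, length Q = n /\ NoDup (E ++ Q) /\ forall q, In q Q -> dist p0 q < r.
Proof.
  intros Hr HE. induction n as [|n IH].
  - exists nil. rewrite app_nil_r. split; auto. split; auto. intros q [].
  - destruct IH as [Q [HQ1 [HQ2 HQ3]]].
    destruct (fresh_point p0 r (E ++ Q) Hr) as [q [Hq Hd]].
    exists (Q ++ q :: nil). split; [rewrite length_app; simpl; lia|split].
    + rewrite app_assoc. apply NoDup_app; auto.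
      * repeat constructor. intros [].
      * intros a Ha [<-|[]]. contradiction.
    + intros a Ha. apply in_app_or in Ha. destruct Ha as [Ha|[<-|[]]]; auto.
Qed.

Lemma top_up (Y : X -> Prop) s l rho (base : list X) (need : X -> nat) :
  0 < rho -> rho <= s/100 -> NoDup base -> separated X s l ->
  (forall c, In c l -> exists p0, Y p0 /\ dist p0 c < s/8 + rho) ->
  forall l1, (forall c, In c l1 -> In c l) -> NoDup l1 ->
  exists P, NoDup (base ++ P) /\
    (forall q, In q P -> exists p0 c, Y p0 /\ dist p0 q < rho /\ In c l /\ dist q c < s/8 + 2*rho) /\
    (forall c, In c l -> length (filter (near X s c) P) =
                         if in_dec (Xdec X) c l1 then need c else 0%nat).
Proof.
  intros Hr Hrs Hbase Hsep Hanchor l1. induction l1 as [|c1 l1 IH]; intros Hsub Hnd1.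
  - exists nil. rewrite app_nil_r. repeat split; auto. intros q [].
  - inversion Hnd1; subst.
    destruct IH as [P [HP1 [HP2 HP3]]]; [intros c0 Hc0; apply Hsub; right; auto|auto|].
    assert (Hc1 : In c1 l) by (apply Hsub; left; auto).
    destruct (Hanchor c1 Hc1) as [p0 [Hp0Y Hp0c]].
    destruct (fresh_points p0 rho (need c1) (base ++ P) Hr HP1) as [Q [HQ1 [HQ2 HQ3]]].
    assert (HQc1 : forall q, In q Q -> dist q c1 < s/8 + 2*rho).
    { intros q Hq. specialize (HQ3 q Hq).
      pose proof (dist_tri X q p0 c1). pose proof (dist_sym X q p0). lra. }
    exists (P ++ Q). split; [rewrite app_assoc; auto|split].
    + intros q Hq. apply in_app_or in Hq. destruct Hq as [Hq|Hq]; auto.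
      exists p0, c1. auto.
    + intros c Hcl. rewrite filter_app, length_app, HP3 by auto.
      assert (Hnear : forall q, In q Q -> (near X s c q = true <-> c = c1))
        by (intros q Hq; apply (near_iff_center X s l); auto; specialize (HQc1 q Hq); lra).
      destruct (Xdec X c c1) as [->|Hne].
      * rewrite (filter_ext_in _ (fun _ => true)), filter_true, HQ1
          by (intros q Hq; apply Hnear; auto).
        destruct (in_dec (Xdec X) c1 l1) as [Hin|_]; [contradiction|].
        destruct (in_dec (Xdec X) c1 (c1 :: l1)) as [_|Hn]; [lia|].
        exfalso; apply Hn; left; auto.
      * rewrite filter_none; [change (length (@nil X)) with 0%nat; rewrite Nat.add_0_r|].
        -- destruct (in_dec (Xdec X) c l1) as [Hi1|Hi1];
             destruct (in_dec (Xdec X) c (c1 :: l1)) as [Hi2|Hi2]; try reflexivity.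
           ++ exfalso; apply Hi2; right; auto.
           ++ destruct Hi2 as [Hh|Hh]; [congruence|contradiction].
        -- intros q Hq. destruct (near X s c q) eqn:E; auto.
           apply Hnear in E; auto. contradiction.
Qed.

Lemma even_refinement_nearby (Y : X -> Prop) s l rho : compact_set X Y ->
  cluster_net X Y s l -> 0 < rho -> rho <= s/100 ->
  exists F m, NoDup F /\ (2 <= m)%nat /\
    (forall q, In q F -> exists c, In c l /\ dist q c < s/8 + 2*rho) /\
    even_refinement X s l F m /\
    (forall x, Y x -> exists p, In p F /\ dist p x <= rho) /\
    (forall p, In p F -> exists x, Y x /\ dist x p <= rho).
Proof.
  intros Hc HG Hr Hrs. pose proof HG as [Hnd [H1 [H2 Hsep]]].
  destruct (finite_net X Y rho Hc Hr) as [ly [Hly1 [Hly2 Hly3]]].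
  set (nc := fun c => length (filter (near X s c) ly)).
  set (m := fold_right (fun a acc => max (nc a) acc) 2%nat l).
  assert (Hanchor : forall c, In c l -> exists p0, Y p0 /\ dist p0 c < s/8 + rho).
  { intros c Hcl. destruct (H2 c Hcl) as [x [Hx Hd]]. destruct (Hly3 x Hx) as [p [Hp1 Hp2]].
    exists p. split; auto. pose proof (dist_tri X p x c). lra. }
  destruct (top_up Y s l rho ly (fun c => m - nc c)%nat Hr Hrs Hly1 Hsep Hanchor l
              (fun c H => H) Hnd) as [P [HP1 [HP2 HP3]]].
  exists (ly ++ P), m. split; [auto|split; [apply list_max_ge_init|]].
  split; [|split; [|split]].
  - intros q Hq. apply in_app_or in Hq. destruct Hq as [Hq|Hq].
    + destruct (H1 q (Hly2 q Hq)) as [c [Hcc Hd]]. exists c. split; auto. lra.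
    + destruct (HP2 q Hq) as [p0 [c [_ [_ [Hcc Hd]]]]]. eauto.
  - intros c Hcl. rewrite filter_app, length_app, HP3 by auto.
    destruct (in_dec (Xdec X) c l); [|contradiction].
    assert (nc c <= m)%nat by (apply list_max_ge; auto). fold (nc c). lia.
  - intros x Hx. destruct (Hly3 x Hx) as [p [Hp1 Hp2]].
    exists p. split; [apply in_or_app; auto|lra].
  - intros p Hpp. apply in_app_or in Hpp. destruct Hpp as [Hpp|Hpp].
    + exists p. rewrite dist_refl. split; auto. lra.
    + destruct (HP2 p Hpp) as [p0 [c [Hp0 [Hd _]]]]. exists p0. split; auto. lra.
Qed.

End Perfect.

Section NowhereDense.
Variable X : MetricSpace.

Definition no_cluster_net (K : KX X) : Prop :=
  forall k l, ~ cluster_net X (KS K) (dyadic k) l.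

Definition stuck_at (k : nat) (K : KX X) : Prop :=
  exists l, cluster_net X (KS K) (dyadic k) l /\ ~ even_refinable X (KS K) k l.

Lemma close_finite_set_net (F : list X) (Z : X -> Prop) s d eta : NoDup F ->
  (forall a b, In a F -> In b F -> a <> b -> d <= dist a b) -> 2*s <= d -> eta <= s/8 ->
  (forall p, In p F -> exists w, Z w /\ dist w p < eta) ->
  (forall w, Z w -> exists p, In p F /\ dist p w < eta) -> cluster_net X Z s F.
Proof.
  intros Hnd Hd Hsd He H1 H2. split; [auto|split; [|split]].
  - intros x Hx. destruct (H2 x Hx) as [p [Hp Hdp]].
    exists p. split; auto. rewrite dist_sym. lra.
  - intros c Hc. destruct (H1 c Hc) as [w [Hw Hdw]]. exists w. split; auto. lra.
  - intros a b Ha Hb Hab. specialize (Hd a b Ha Hb Hab). lra.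
Qed.

Lemma finite_set_stable_net (F : list X) (p : X) (Hp : In p F) k0 : NoDup F ->
  exists k eta, (k0 < k)%nat /\ 0 < eta /\
    forall z : KX X, dH X (list_KX X F p Hp) z < eta -> cluster_net X (KS z) (dyadic k) F.
Proof.
  intro Hnd. destruct (min_sep X F) as [d [Hd Hsep]].
  destruct (dyadic_small (d/2) k0 ltac:(lra)) as [k [Hk0 Hk]].
  pose proof (dyadic_pos k).
  exists k, (dyadic k / 8). split; [auto|split; [lra|]].
  intros z Hz. destruct (dH_lt _ _ _ Hz) as [Hz1 Hz2].
  apply (close_finite_set_net F (KS z) (dyadic k) d (dyadic k / 8)); auto; lra.
Qed.

Lemma no_cluster_net_nowhere_dense : nowhere_dense_d (KX X) (dH X) no_cluster_net.
Proof.
  apply nowhere_dense_crit. intros K0 eps Heps.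
  destruct (finite_net X (KS K0) (eps/2) (KS_cpt K0) ltac:(lra)) as [F [HF1 [HF2 HF3]]].
  destruct (KS_ne K0) as [x0 Hx0]. destruct (HF3 x0 Hx0) as [p [Hp _]].
  destruct (finite_set_stable_net F p Hp 0 HF1) as [k [eta [_ [Heta Hnet]]]].
  exists (list_KX X F p Hp), eta. split; [|split; [auto|]].
  - apply Rle_lt_trans with (eps/2); [|lra]. apply dH_le; simpl.
    + intros x Hx. destruct (HF3 x Hx) as [q [Hq Hdq]]. exists q. split; auto. lra.
    + intros y Hy. exists y. rewrite dist_refl. split; auto. lra.
  - intros z Hz Hn. exact (Hn k F (Hnet z Hz)).
Qed.

Lemma even_refinement_transfer (Z : X -> Prop) (F l lz : list X) s rho eta m :
  cluster_net X Z s lz -> separated X s l -> even_refinement X s l F m ->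
  (forall q, In q F -> exists c, In c l /\ dist q c < s/8 + 2*rho) ->
  (forall x, Z x -> exists q, In q F /\ dist q x < eta) ->
  rho <= s/100 -> eta <= s/16 -> even_refinement X s lz F m.
Proof.
  intros [_ [_ [Hlz _]]] Hsep HF Hcl HZ Hrho Heta c Hc.
  destruct (Hlz c Hc) as [x [Hx Hdx]]. destruct (HZ x Hx) as [q0 [Hq0 Hdq0]].
  destruct (Hcl q0 Hq0) as [c0 [Hc0 Hdc0]].
  assert (Hcc0 : dist c0 c < s/4 + 2*rho + eta).
  { pose proof (dist_tri X c0 q0 c). pose proof (dist_tri X q0 x c).
    pose proof (dist_sym X c0 q0). lra. }
  rewrite <- (HF c0 Hc0). f_equal. apply filter_ext_in. intros q Hq.
  destruct (Hcl q Hq) as [cq [Hcq Hdcq]].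
  apply (near_moved_center X s l c0 c cq q (s/8 + 2*rho) (s/4 + 2*rho + eta)); auto.
  pose proof (dist_pos c0 c). lra.
Qed.

Lemma stuck_nowhere_dense k : perfect_space X ->
  nowhere_dense_d (KX X) (dH X) (stuck_at k).
Proof.
  intro Hperf. apply nowhere_dense_crit. intros K0 eps Heps.
  set (s := dyadic k). assert (Hs : 0 < s) by apply dyadic_pos.
  destruct (classic (exists y : KX X, dH X K0 y < eps /\ exists l, cluster_net X (KS y) s l))
    as [[y [Hy [l Hl]]]|Hno].
  2:{ exists K0, eps. pose proof (dH_refl K0). split; [lra|split; auto].
      intros z Hz [l [Hl _]]. apply Hno. eauto. }
  set (rho := Rmin ((eps - dH X K0 y)/2) (s/100)).
  assert (Hrho : 0 < rho) by (apply Rmin_pos; lra).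
  assert (Hrho1 : rho <= (eps - dH X K0 y)/2) by apply Rmin_l.
  assert (Hrho2 : rho <= s/100) by apply Rmin_r.
  destruct (even_refinement_nearby X Hperf (KS y) s l rho (KS_cpt y) Hl Hrho Hrho2)
    as [F [m [HF1 [Hm [HF2 [HF3 [HF4 HF5]]]]]]].
  destruct (KS_ne y) as [y0 Hy0]. destruct (HF4 y0 Hy0) as [p [Hp0 _]].
  destruct (finite_set_stable_net F p Hp0 k HF1) as [k' [eta0 [Hkk [Heta0 Hnet]]]].
  pose proof (dyadic_lt k k' Hkk). pose proof (dyadic_pos k'). fold s in H.
  pose proof (Rmin_l eta0 (s/16)). pose proof (Rmin_r eta0 (s/16)).
  set (eta := Rmin eta0 (s/16)) in *.
  exists (list_KX X F p Hp0), eta. split; [|split; [apply Rmin_pos; lra|]].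
  - apply Rle_lt_trans with (dH X K0 y + (eps - dH X K0 y)/4 + rho); [|lra].
    apply (dH_trans_le K0 y); auto. lra.
  - intros z Hz [lz [Hlz Hn]]. fold s in Hlz. apply Hn. exists k', F, m.
    split; [auto|split; [auto|split]].
    + apply Hnet. lra.
    + destruct (dH_lt _ _ _ Hz) as [_ Hz2].
      apply (even_refinement_transfer (KS z) F l lz s rho eta m); auto.
      apply Hl.
Qed.

End NowhereDense.

Definition clamp01 (u : R) : R := Rmax 0 (Rmin 1 u).

Definition ramp (t x : R) : R := clamp01 (2 * x / t - 1).

Lemma ramp_bnd t x : 0 <= ramp t x <= 1.
Proof. unfold ramp, clamp01. split; [apply Rmax_l|apply Rmax_lub; [lra|apply Rmin_l]]. Qed.

Lemma ramp_0 t x : 0 < t -> 2 * x <= t -> ramp t x = 0.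
Proof.
  intros Ht H. unfold ramp, clamp01.
  assert (2 * x / t <= 1).
  { apply (Rmult_le_reg_r t); auto. unfold Rdiv. rewrite Rmult_assoc, Rinv_l; lra. }
  rewrite Rmin_right by lra. rewrite Rmax_left; lra.
Qed.

Lemma ramp_1 t x : 0 < t -> t <= x -> ramp t x = 1.
Proof.
  intros Ht H. unfold ramp, clamp01.
  assert (2 <= 2 * x / t).
  { apply (Rmult_le_reg_r t); auto. unfold Rdiv. rewrite Rmult_assoc, Rinv_l; lra. }
  rewrite Rmin_left by lra. rewrite Rmax_right; lra.
Qed.

Lemma ramp_mono t x y : 0 < t -> x <= y -> ramp t x <= ramp t y.
Proof.
  intros Ht H. unfold ramp, clamp01. apply Rle_max_compat_l, Rle_min_compat_l.
  unfold Rdiv. pose proof (Rinv_0_lt_compat t Ht). nra.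
Qed.

Lemma ramp_lip t x y : 0 < t -> ramp t y <= ramp t x + 2 / t * Rabs (y - x).
Proof.
  intro Ht.
  assert (Hclamp : forall u v, clamp01 v <= clamp01 u + Rabs (v - u)).
  { intros u v. unfold clamp01, Rabs. destruct (Rcase_abs (v - u)); unfold Rmax, Rmin;
    destruct (Rle_dec 1 u); destruct (Rle_dec 1 v);
    repeat match goal with |- context [Rle_dec ?a ?b] => destruct (Rle_dec a b) end; lra. }
  unfold ramp. eapply Rle_trans; [apply Hclamp|].
  replace ((2 * y / t - 1) - (2 * x / t - 1)) with (2 / t * (y - x)) by (field; lra).
  rewrite Rabs_mult, (Rabs_pos_eq (2 / t)); [lra|].
  unfold Rdiv. pose proof (Rinv_0_lt_compat t Ht). lra.
Qed.

Lemma sum_indicator_prefix (M : nat) c k :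
  (1 <= M)%nat -> sum_f_R0 (fun i => if lt_dec i M then c else 0) k = INR (min (S k) M) * c.
Proof.
  intro HM. induction k.
  - change ((if lt_dec 0 M then c else 0) = INR (min 1 M) * c).
    destruct (lt_dec 0 M); [|lia].
    replace (min 1 M) with 1%nat by lia. simpl. lra.
  - change (sum_f_R0 (fun i => if lt_dec i M then c else 0) k +
            (if lt_dec (S k) M then c else 0) = INR (min (S (S k)) M) * c).
    rewrite IHk. destruct (lt_dec (S k) M).
    + replace (min (S k) M) with (S k) by lia. replace (min (S (S k)) M) with (S (S k)) by lia.
      rewrite (S_INR (S k)). lra.
    + replace (min (S k) M) with M by lia. replace (min (S (S k)) M) with M by lia. lra.
Qed.

Lemma ER_psum_fin (f : nat -> ER) (a : nat -> R) n :
  (forall i, f i = Fin (a i)) -> ER_psum f n = Fin (sum_f_R0 a n).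
Proof. intro H. induction n; simpl; [apply H|]. rewrite IHn, H. reflexivity. Qed.

Lemma ER_series_le (f : nat -> ER) (a : nat -> R) B : (forall i, f i = Fin (a i)) ->
  (forall n, sum_f_R0 a n <= B) -> exists v, ER_series f = Fin v /\ v <= B.
Proof.
  intros Hf HB. unfold ER_series, ER_sup.
  destruct (excluded_middle_informative _) as [[[n Hn]|H]|H].
  - rewrite (ER_psum_fin f a n Hf) in Hn. discriminate.
  - exfalso. apply H. exists B. intros r [n Hn].
    rewrite (ER_psum_fin f a n Hf) in Hn. injection Hn as ->. auto.
  - eexists. split; [reflexivity|]. apply Rsup_le.
    + exists (sum_f_R0 a 0), 0%nat. rewrite (ER_psum_fin f a 0 Hf). auto.
    + intros r [n Hn]. rewrite (ER_psum_fin f a n Hf) in Hn. injection Hn as ->. auto.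
Qed.

Lemma ER_series_ge (f : nat -> ER) (a : nat -> R) v : (forall i, f i = Fin (a i)) ->
  ER_series f = Fin v -> forall n, sum_f_R0 a n <= v.
Proof.
  intros Hf Hv n. unfold ER_series, ER_sup in Hv.
  destruct (excluded_middle_informative _) as [H|H]; [discriminate|].
  injection Hv as <-. apply Rsup_ub.
  - apply NNPP. intro Hb. apply H. right. exact Hb.
  - exists n. rewrite (ER_psum_fin f a n Hf). reflexivity.
Qed.

Section HausdorffMeasure.
Variable X : MetricSpace.

Lemma diam_le (A : X -> Prop) r : 0 <= r -> (forall x y, A x -> A y -> dist x y <= r) ->
  exists d, diam X A = Fin d /\ d <= r.
Proof.
  intros Hr H. unfold diam. destruct (excluded_middle_informative _) as [[x0 Hx0]|Hn].
  - destruct (excluded_middle_informative _) as [Hb|Hb].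
    + eexists; split; [reflexivity|]. apply Rsup_le.
      * exists (dist x0 x0), x0, x0. auto.
      * intros v [x [y [Hx [Hy ->]]]]. auto.
    + exfalso. apply Hb. exists r. intros v [x [y [Hx [Hy ->]]]]. auto.
  - exists 0. split; auto.
Qed.

Lemma diam_pair (A : X -> Prop) d x y : diam X A = Fin d -> A x -> A y -> dist x y <= d.
Proof.
  intros Hd Hx Hy. unfold diam in Hd. destruct (excluded_middle_informative _) as [Hne|Hn].
  - destruct (excluded_middle_informative _) as [Hb|Hb]; [|discriminate].
    injection Hd as <-. apply Rsup_ub; auto. exists x, y. auto.
  - exfalso. apply Hn. eauto.
Qed.

Lemma diam_nonneg (A : X -> Prop) d : diam X A = Fin d -> 0 <= d.
Proof.
  intro Hd. destruct (classic (exists y, A y)) as [[y Hy]|Hn].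
  - pose proof (diam_pair A d y y Hd Hy Hy). rewrite dist_refl in H. auto.
  - unfold diam in Hd. destruct (excluded_middle_informative _); [contradiction|].
    injection Hd as <-. lra.
Qed.

Definition cover_sums (h : R -> R) (delta : R) (A : X -> Prop) : ER -> Prop :=
  fun v => exists C : nat -> X -> Prop,
    (forall x, A x -> exists i, C i x) /\
    (forall i, ER_le (diam X (C i)) (Fin delta)) /\
    v = ER_series (fun i => ER_app h (diam X (C i))).

(* The diameter of A as a real number (0 if it is infinite). *)
Definition diam_val (A : X -> Prop) : R := match diam X A with Fin d => d | PInf => 0 end.

Lemma diam_val_spec (A : X -> Prop) delta : ER_le (diam X A) (Fin delta) ->
  diam X A = Fin (diam_val A) /\ diam_val A <= delta.
Proof. unfold diam_val. destruct (diam X A); simpl; auto. contradiction. Qed.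

Lemma cover_term (h : R -> R) (A : X -> Prop) delta : ER_le (diam X A) (Fin delta) ->
  ER_app h (diam X A) = Fin (h (diam_val A)).
Proof. intro H. destruct (diam_val_spec A delta H) as [-> _]. reflexivity. Qed.

Section Gauge.
Variable h : R -> R.
Hypothesis h_nonneg : forall x, 0 <= h x.

Lemma cover_sums_nonneg delta A r : cover_sums h delta A (Fin r) -> 0 <= r.
Proof.
  intros [C [_ [Hd Hv]]]. symmetry in Hv.
  pose proof (ER_series_ge _ (fun i => h (diam_val (C i))) r
                (fun i => cover_term h (C i) delta (Hd i)) Hv 0%nat) as H0.
  simpl in H0. pose proof (h_nonneg (diam_val (C 0%nat))). lra.
Qed.

Lemma Hh_delta_le delta A (C : nat -> X -> Prop) B :
  (forall x, A x -> exists i, C i x) -> (forall i, ER_le (diam X (C i)) (Fin delta)) ->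
  (forall n, sum_f_R0 (fun i => h (diam_val (C i))) n <= B) ->
  exists v, Hh_delta X h delta A = Fin v /\ v <= B.
Proof.
  intros Hcov Hd HB.
  destruct (ER_series_le (fun i => ER_app h (diam X (C i))) (fun i => h (diam_val (C i))) B)
    as [v [Hv Hv1]]; [intro i; apply (cover_term h _ delta (Hd i))|exact HB|].
  assert (Hcs : cover_sums h delta A (Fin v)) by (exists C; auto).
  change (exists v0, ER_inf (cover_sums h delta A) = Fin v0 /\ v0 <= B).
  unfold ER_inf. destruct (excluded_middle_informative _) as [_|Hn].
  - eexists. split; [reflexivity|]. eapply Rle_trans; [|exact Hv1]. apply Rinf_lb; [|exact Hcs].
    exists 0. apply cover_sums_nonneg.
  - exfalso. apply Hn. exists v. exact Hcs.
Qed.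

End Gauge.

Lemma Hh_finite (h : R -> R) A B : (forall delta, 0 < delta -> exists v, Hh_delta X h delta A = Fin v /\ v <= B) ->
  ER_lt (Hh X h A) PInf.
Proof.
  intro Hb. unfold Hh, ER_sup. destruct (excluded_middle_informative _) as [[H|H]|H].
  - exfalso. destruct H as [d [Hd He]]. destruct (Hb d Hd) as [v [Hv _]].
    rewrite Hv in He. discriminate.
  - exfalso. apply H. exists B. intros r [d [Hd He]]. destruct (Hb d Hd) as [v [Hv Hv1]].
    rewrite Hv in He. injection He as ->. auto.
  - simpl. auto.
Qed.

Lemma Hh_positive (h : R -> R) A delta0 B : 0 < delta0 -> 0 < B ->
  (forall r, cover_sums h delta0 A (Fin r) -> B <= r) -> ER_lt (Fin 0) (Hh X h A).
Proof.
  intros Hd0 HB Hlow. unfold Hh, ER_sup. destruct (excluded_middle_informative _) as [H|H].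
  - simpl. auto.
  - simpl. assert (Hb : bound (fun r => exists delta, 0 < delta /\ Fin r = Hh_delta X h delta A))
      by (apply NNPP; intro; apply H; right; auto).
    destruct (Hh_delta X h delta0 A) eqn:E.
    + assert (B <= r).
      { change (ER_inf (cover_sums h delta0 A) = Fin r) in E.
        unfold ER_inf in E. destruct (excluded_middle_informative _) as [Hex|]; [|discriminate].
        injection E as <-. apply Rinf_ge; [exact Hex|exact Hlow]. }
      apply Rlt_le_trans with r; [lra|]. apply Rsup_ub; [exact Hb|]. eauto.
    + exfalso. apply H. left. eauto.
Qed.

End HausdorffMeasure.

Section Tower.
Variable X : MetricSpace.
Variable K : KX X.
Hypothesis has_net : exists k l, cluster_net X (KS K) (dyadic k) l.
Hypothesis always_refinable :
  forall k l, cluster_net X (KS K) (dyadic k) l -> even_refinable X (KS K) k l.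

Definition refines_to (st : nat * list X) (r : nat * list X * nat) : Prop :=
  (fst st < fst (fst r))%nat /\ (2 <= snd r)%nat /\
  cluster_net X (KS K) (dyadic (fst (fst r))) (snd (fst r)) /\
  even_refinement X (dyadic (fst st)) (snd st) (snd (fst r)) (snd r).

(* Choice of the next level; its data is irrelevant when st is not a net. *)
Lemma next_level_ex (st : nat * list X) :
  exists r, cluster_net X (KS K) (dyadic (fst st)) (snd st) -> refines_to st r.
Proof.
  destruct (classic (cluster_net X (KS K) (dyadic (fst st)) (snd st))) as [H|H].
  - destruct (always_refinable _ _ H) as [k' [l' [m Hs]]]. exists (k', l', m). auto.
  - exists (0%nat, nil, 0%nat). intro; contradiction.
Qed.

Definition next_level (st : nat * list X) : nat * list X * nat :=
  proj1_sig (constructive_indefinite_description _ (next_level_ex st)).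

Lemma first_level_ex : exists st : nat * list X, cluster_net X (KS K) (dyadic (fst st)) (snd st).
Proof. destruct has_net as [k [l H]]. exists (k, l). exact H. Qed.

Fixpoint level (n : nat) : nat * list X :=
  match n with
  | O => proj1_sig (constructive_indefinite_description _ first_level_ex)
  | S n => fst (next_level (level n))
  end.

Definition T n := dyadic (fst (level n)).
Definition L n := snd (level n).
Definition mult n := snd (next_level (level n)).

Lemma next_level_spec n : cluster_net X (KS K) (T n) (L n) ->
  refines_to (level n) (next_level (level n)).
Proof. exact (proj2_sig (constructive_indefinite_description _ (next_level_ex (level n)))). Qed.

Lemma level_spec n : cluster_net X (KS K) (T n) (L n) /\ refines_to (level n) (next_level (level n)).
Proof.
  assert (Hnet : cluster_net X (KS K) (T n) (L n)).
  { induction n as [|n IH].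
    - exact (proj2_sig (constructive_indefinite_description _ first_level_ex)).
    - exact (proj1 (proj2 (proj2 (next_level_spec n IH)))). }
  split; [exact Hnet|exact (next_level_spec n Hnet)].
Qed.

Lemma level_net n : cluster_net X (KS K) (T n) (L n).
Proof. apply level_spec. Qed.

Lemma level_exp_S n : (fst (level n) < fst (level (S n)))%nat.
Proof. apply (level_spec n). Qed.

Lemma mult_ge2 n : (2 <= mult n)%nat.
Proof. apply (level_spec n). Qed.

Lemma level_even n : even_refinement X (T n) (L n) (L (S n)) (mult n).
Proof. apply (level_spec n). Qed.

Lemma T_pos n : 0 < T n.
Proof. apply dyadic_pos. Qed.

Lemma T_S n : T (S n) <= T n / 2.
Proof. apply dyadic_lt, level_exp_S. Qed.

Lemma T_anti n N : (n <= N)%nat -> T N <= T n.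
Proof. induction 1; [lra|]. pose proof (T_S m). pose proof (T_pos m). lra. Qed.

Lemma T_small a : 0 < a -> exists n, T n < a.
Proof.
  intro Ha. destruct (dyadic_small a 0 Ha) as [k [_ Hk]]. exists k.
  assert (Hge : (k <= fst (level k))%nat).
  { clear Hk. induction k as [|k IH]; [lia|]. pose proof (level_exp_S k). lia. }
  pose proof (dyadic_anti k _ Hge). unfold T. lra.
Qed.

Lemma L_ne n : exists c, In c (L n).
Proof.
  destruct (KS_ne K) as [x Hx]. destruct (level_net n) as [_ [H2 _]].
  destruct (H2 x Hx) as [c [Hc _]]. eauto.
Qed.

Lemma parent_unique N b : In b (L (S N)) ->
  length (filter (fun a => near X (T N) a b) (L N)) = 1%nat.
Proof.
  intro Hb. destruct (level_net (S N)) as [_ [_ [H3 _]]]. destruct (H3 b Hb) as [x [Hx Hdx]].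
  pose proof (T_S N). pose proof (T_pos (S N)).
  destruct (unique_center X (KS K) (T N) (L N) x b (level_net N) Hx ltac:(lra))
    as [c0 [Hc0 [_ Hch]]].
  apply count_one with c0; [apply (level_net N)|auto|intros q Hq; apply Hch; auto].
Qed.

Lemma ancestor_compat n N a b : (n <= N)%nat -> In a (L N) -> In b (L (S N)) ->
  near X (T N) a b = true -> forall c, In c (L n) -> near X (T n) c b = near X (T n) c a.
Proof.
  intros HnN Ha Hb Hab c Hc. apply near_true in Hab.
  destruct (level_net (S N)) as [_ [_ [H3 _]]]. destruct (H3 b Hb) as [x [Hx Hdx]].
  destruct (level_net N) as [_ [_ [H3' _]]]. destruct (H3' a Ha) as [x' [Hx' Hdx']].
  pose proof (T_S N). pose proof (T_pos (S N)). pose proof (T_anti n N HnN). pose proof (T_pos N).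
  destruct (unique_center X (KS K) (T n) (L n) x b (level_net n) Hx ltac:(lra))
    as [c0 [Hc0 [Hd0 Hch]]].
  destruct (unique_center X (KS K) (T n) (L n) x' a (level_net n) Hx' ltac:(lra))
    as [c1 [Hc1 [Hd1 Hch']]].
  assert (c0 = c1).
  { apply (same_center X (KS K) (T n) (L n) x x'); auto; [apply level_net|].
    pose proof (dist_tri X x b x'). pose proof (dist_tri X b a x'). pose proof (dist_sym X a x').
    lra. }
  subst c1. destruct (near X (T n) c b) eqn:E1; destruct (near X (T n) c a) eqn:E2; auto.
  - apply Hch in E1; auto. subst. rewrite <- E2. symmetry. apply Hch'; auto.
  - apply Hch' in E2; auto. subst. rewrite <- E1. apply Hch; auto.
Qed.

Fixpoint descendants (n d : nat) : nat :=
  match d with O => 1%nat | S d => (descendants n d * mult (n + d))%nat end.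

Lemma descendants_count n d c : In c (L n) ->
  length (filter (near X (T n) c) (L (n + d))) = descendants n d.
Proof.
  intro Hc. induction d as [|d IH].
  - rewrite Nat.add_0_r. apply count_one with c; [apply level_net|auto|].
    intros q Hq. rewrite near_true. pose proof (T_pos n). split.
    + intro Hnear. apply NNPP; intro Hne. destruct (level_net n) as [_ [_ [_ Hsep]]].
      specialize (Hsep q c Hq Hc Hne). lra.
    + intros ->. rewrite dist_refl. lra.
  - replace (n + S d)%nat with (S (n + d)) by lia.
    rewrite (count_by_parents X (L (n + d)) (L (S (n + d))) (near X (T (n + d)))
               (near X (T n) c) (near X (T n) c)).
    + rewrite (map_ext_in _ (fun _ => mult (n + d))).
      * rewrite list_sum_const, IH. reflexivity.
      * intros a Ha. apply filter_In in Ha. apply (level_even (n + d)). tauto.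
    + intros b Hb. apply parent_unique; auto.
    + intros a b Ha Hb Hab. apply (ancestor_compat n (n + d)); auto. lia.
Qed.

Lemma level_size n d : length (L (n + d)) = (length (L n) * descendants n d)%nat.
Proof.
  induction d as [|d IH]; [rewrite Nat.add_0_r; simpl; lia|].
  replace (n + S d)%nat with (S (n + d)) by lia.
  rewrite <- (filter_true (L (S (n + d)))).
  rewrite (count_by_parents X (L (n + d)) (L (S (n + d))) (near X (T (n + d)))
             (fun _ => true) (fun _ => true)).
  - rewrite filter_true, (map_ext_in _ (fun _ => mult (n + d))).
    + rewrite list_sum_const, IH. simpl. lia.
    + intros a Ha. apply (level_even (n + d)). auto.
  - intros b Hb. apply parent_unique; auto.
  - auto.
Qed.

Lemma level_size_pos n : (1 <= length (L n))%nat.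
Proof. destruct (L_ne n) as [c Hc]. destruct (L n); [destruct Hc|simpl; lia]. Qed.

Lemma level_size_S n : length (L (S n)) = (length (L n) * mult n)%nat.
Proof. pose proof (level_size n 1) as H. rewrite Nat.add_1_r in H. rewrite H. simpl. rewrite !Nat.add_0_r. reflexivity. Qed.

Lemma level_size_ge n : (n + 1 <= length (L n))%nat.
Proof.
  induction n; [apply level_size_pos|].
  rewrite level_size_S. pose proof (mult_ge2 n). nia.
Qed.

Lemma level_size_mono n N : (n <= N)%nat -> (length (L n) <= length (L N))%nat.
Proof. induction 1; [lia|]. rewrite level_size_S. pose proof (mult_ge2 m). nia. Qed.

Definition w n := / INR (length (L n)).

Lemma INR_size_pos n : 0 < INR (length (L n)).
Proof. apply lt_0_INR. pose proof (level_size_pos n). lia. Qed.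

Lemma w_pos n : 0 < w n.
Proof. apply Rinv_0_lt_compat, INR_size_pos. Qed.

Lemma w_le1 n : w n <= 1.
Proof.
  unfold w. rewrite <- Rinv_1. apply Rinv_le_contravar; [lra|].
  apply (le_INR 1), level_size_pos.
Qed.

Lemma w_anti n N : (n <= N)%nat -> w N <= w n.
Proof.
  intro H. apply Rinv_le_contravar; [apply INR_size_pos|]. apply le_INR, level_size_mono, H.
Qed.

Lemma w_small e : 0 < e -> exists n, w n < e.
Proof.
  intro He. destruct (archimed_cor1 e He) as [N [HN HN0]].
  exists N. eapply Rle_lt_trans; [|exact HN].
  apply Rinv_le_contravar; [apply lt_0_INR; lia|].
  apply le_INR. pose proof (level_size_ge N). lia.
Qed.

Lemma w_descendants n d : INR (descendants n d) * w (n + d) = w n.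
Proof.
  unfold w. rewrite level_size, mult_INR.
  pose proof (INR_size_pos n). pose proof (INR_size_pos (n + d)) as Hnd.
  rewrite level_size, mult_INR in Hnd.
  assert (0 < INR (descendants n d)) by (pose proof (pos_INR (descendants n d)); nra).
  field. split; lra.
Qed.

(* The gauge: h = sup_m w_m ramp_(T_(m+1)), a continuous increasing function
   that equals about w_n on diameters between T_(n+1) and T_n/4. *)
Definition phi m x := w m * ramp (T (S m)) x.

Definition hgauge x := Rsup (fun v => exists m, v = phi m x).

Lemma phi_bnd m x : 0 <= phi m x <= w m.
Proof. unfold phi. pose proof (ramp_bnd (T (S m)) x). pose proof (w_pos m). split; nra. Qed.

Lemma hgauge_bounded x : bound (fun v => exists m, v = phi m x).
Proof. exists 1. intros v [m ->]. pose proof (phi_bnd m x). pose proof (w_le1 m). lra. Qed.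

Lemma phi_le_hgauge m x : phi m x <= hgauge x.
Proof. apply Rsup_ub; [apply hgauge_bounded|eauto]. Qed.

Lemma hgauge_le x b : (forall m, phi m x <= b) -> hgauge x <= b.
Proof. intro H. apply Rsup_le; [exists (phi 0 x); eauto|]. intros v [m ->]. auto. Qed.

Lemma hgauge_nonneg x : 0 <= hgauge x.
Proof. pose proof (phi_le_hgauge 0 x). pose proof (phi_bnd 0 x). lra. Qed.

Lemma hgauge_mono x y : x <= y -> hgauge x <= hgauge y.
Proof.
  intro H. apply hgauge_le. intro m. eapply Rle_trans; [|apply phi_le_hgauge].
  apply Rmult_le_compat_l; [left; apply w_pos|]. apply ramp_mono; auto. apply T_pos.
Qed.

Lemma hgauge_ge_w n d : T (S n) <= d -> w n <= hgauge d.
Proof.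
  intro H. eapply Rle_trans; [|apply (phi_le_hgauge n)]. unfold phi.
  rewrite ramp_1; [lra|apply T_pos|auto].
Qed.

(* The ramps of the levels m < n vanish below T_n / 2, so h <= w_n on [0, T_n / 4]. *)
Lemma hgauge_le_w n x : x <= T n / 4 -> hgauge x <= w n.
Proof.
  intro Hx. apply hgauge_le. intro m. destruct (le_lt_dec n m) as [Hle|Hlt].
  - pose proof (phi_bnd m x). pose proof (w_anti n m Hle). lra.
  - unfold phi. rewrite ramp_0; [pose proof (w_pos n); lra|apply T_pos|].
    pose proof (T_anti (S m) n Hlt). pose proof (T_pos n). lra.
Qed.

Lemma hgauge_0 : hgauge 0 = 0.
Proof.
  apply Rle_antisym; [|apply hgauge_nonneg]. apply hgauge_le. intro m. unfold phi.
  rewrite ramp_0; [lra|apply T_pos|]. pose proof (T_pos (S m)). lra.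
Qed.

Lemma hgauge_pos x : 0 < x -> 0 < hgauge x.
Proof.
  intro Hx. destruct (T_small x Hx) as [n Hn].
  pose proof (T_S n). pose proof (T_pos n).
  pose proof (hgauge_ge_w n x ltac:(lra)). pose proof (w_pos n). lra.
Qed.

(* Away from 0 only finitely many ramps are not saturated, so h is Lipschitz
   on [x0/2, oo). *)
Lemma hgauge_lip x0 N x y : T (S N) <= x0 / 2 -> x0 / 2 <= x -> x0 / 2 <= y ->
  hgauge y <= hgauge x + 2 / T (S N) * Rabs (y - x).
Proof.
  intros HN Hx Hy. pose proof (Rabs_pos (y - x)).
  assert (HLN : 0 <= 2 / T (S N))
    by (unfold Rdiv; pose proof (Rinv_0_lt_compat _ (T_pos (S N))); lra).
  apply hgauge_le. intro m. destruct (le_lt_dec m N) as [Hle|Hlt].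
  - pose proof (ramp_lip (T (S m)) x y (T_pos (S m))).
    pose proof (phi_le_hgauge m x). unfold phi in *.
    pose proof (w_pos m). pose proof (w_le1 m).
    assert (HL : 2 / T (S m) <= 2 / T (S N)).
    { unfold Rdiv. apply Rmult_le_compat_l; [lra|].
      apply Rinv_le_contravar; [apply T_pos|apply T_anti; lia]. }
    assert (0 <= 2 / T (S m))
      by (unfold Rdiv; pose proof (Rinv_0_lt_compat _ (T_pos (S m))); lra).
    assert (w m * (2 / T (S m) * Rabs (y - x)) <= 2 / T (S N) * Rabs (y - x)).
    { apply Rle_trans with (2 / T (S m) * Rabs (y - x)); [|apply Rmult_le_compat_r; auto].
      assert (0 <= 2 / T (S m) * Rabs (y - x)) by (apply Rmult_le_pos; auto). nra. }
    nra.
  - pose proof (phi_bnd m y). pose proof (w_anti N m ltac:(lia)).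
    pose proof (hgauge_ge_w N x ltac:(lra)). nra.
Qed.

Lemma hgauge_cont : continuous_nonneg hgauge.
Proof.
  intros x Hx e He. destruct Hx as [Hx|<-].
  - destruct (T_small (x / 2) ltac:(lra)) as [N HN].
    pose proof (T_S N). pose proof (T_pos (S N)). pose proof (T_pos N).
    set (Lc := 2 / T (S N)).
    assert (HL : 0 < Lc) by (unfold Lc, Rdiv; pose proof (Rinv_0_lt_compat _ H0); lra).
    exists (Rmin (x / 2) (e / (2 * Lc))).
    split; [apply Rmin_pos; [lra|apply Rdiv_lt_0_compat; lra]|].
    intros y Hy Hd.
    pose proof (Rmin_l (x/2) (e / (2 * Lc))). pose proof (Rmin_r (x/2) (e / (2 * Lc))).
    assert (Hy2 : x / 2 <= y) by (apply Rabs_def2 in Hd; lra).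
    pose proof (hgauge_lip x N x y ltac:(lra) ltac:(lra) Hy2) as L1.
    pose proof (hgauge_lip x N y x ltac:(lra) Hy2 ltac:(lra)) as L2.
    fold Lc in L1, L2. rewrite Rabs_minus_sym in L2.
    assert (Lc * Rabs (y - x) < e).
    { assert (Hr : Rabs (y - x) < e / (2 * Lc)) by lra.
      apply Rmult_lt_compat_l with (r := Lc) in Hr; auto.
      replace (Lc * (e / (2 * Lc))) with (e / 2) in Hr by (field; lra). lra. }
    apply Rabs_def1; lra.
  - destruct (w_small e He) as [m Hm]. pose proof (T_pos m).
    exists (T m / 4). split; [lra|].
    intros y Hy Hd. rewrite hgauge_0, Rminus_0_r in *.
    rewrite Rabs_pos_eq in Hd by auto. rewrite Rabs_pos_eq by apply hgauge_nonneg.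
    pose proof (hgauge_le_w m y ltac:(lra)). lra.
Qed.

Lemma hgauge_is_gauge : gauge hgauge.
Proof.
  split; [|split; [|split]].
  - intros x _. apply hgauge_nonneg.
  - intros x y _ H. apply hgauge_mono, H.
  - intros x Hx e He. destruct (hgauge_cont x Hx e He) as [d [Hd H]]. exists d. split; auto.
    intros y Hy. apply H; [lra|]. rewrite Rabs_pos_eq; lra.
  - intros x Hx. split.
    + intro H. destruct Hx as [Hx|Hx]; auto. pose proof (hgauge_pos x Hx). lra.
    + intros ->. apply hgauge_0.
Qed.

(* Upper bound: the |L_n| clusters of level n cover K, each has diameter
   at most T_n/4 and hence h-mass at most w_n = 1/|L_n|. *)
Lemma level_cover n : exists C : nat -> X -> Prop,
  (forall x, KS K x -> exists i, C i x) /\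
  forall i, exists d, diam X (C i) = Fin d /\ d <= T n / 4 /\
    hgauge d <= (if lt_dec i (length (L n)) then w n else 0).
Proof.
  destruct (KS_ne K) as [x0 Hx0]. pose proof (T_pos n).
  exists (fun i => if lt_dec i (length (L n))
           then (fun x => KS K x /\ dist x (nth i (L n) x0) < T n / 8)
           else (fun _ : X => False)).
  split.
  - intros x Hx. destruct (level_net n) as [_ [H2 _]]. destruct (H2 x Hx) as [c [Hc Hdc]].
    destruct (In_nth (L n) c x0 Hc) as [i [Hi Hic]]. exists i.
    destruct (lt_dec i (length (L n))) as [_|Hn]; [|lia]. rewrite Hic. auto.
  - intro i. destruct (lt_dec i (length (L n))).
    + set (ci := nth i (L n) x0).
      destruct (diam_le X (fun x => KS K x /\ dist x ci < T n / 8) (T n / 4)) as [d [Hd Hdr]].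
      * lra.
      * intros x y [_ Hx] [_ Hy]. pose proof (dist_tri X x ci y). pose proof (dist_sym X ci y). lra.
      * exists d. repeat split; auto. apply hgauge_le_w. auto.
    + destruct (diam_le X (fun _ : X => False) 0) as [d [Hd Hdr]]; [lra|intros x y []|].
      pose proof (diam_nonneg X _ d Hd). assert (d = 0) as -> by lra.
      exists 0. rewrite hgauge_0. repeat split; auto; lra.
Qed.

Lemma Hh_delta_upper delta : 0 < delta ->
  exists v, Hh_delta X hgauge delta (KS K) = Fin v /\ v <= 1.
Proof.
  intro Hdel. destruct (T_small (4 * delta) ltac:(lra)) as [n Hn].
  destruct (level_cover n) as [C [Hcov HC]].
  assert (HCd : forall i, ER_le (diam X (C i)) (Fin delta)).
  { intro i. destruct (HC i) as [d [Hd [Hdr _]]]. rewrite Hd. simpl. lra. }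
  apply (Hh_delta_le X hgauge hgauge_nonneg delta (KS K) C 1 Hcov HCd).
  intro k. eapply Rle_trans.
  - apply (sum_growing _ (fun i => if lt_dec i (length (L n)) then w n else 0)).
    intro i. destruct (HC i) as [d [Hd [_ Hh]]].
    destruct (diam_val_spec X (C i) delta (HCd i)) as [Hd' _].
    rewrite Hd in Hd'. injection Hd' as <-. auto.
  - rewrite sum_indicator_prefix by apply level_size_pos.
    pose proof (INR_size_pos n). pose proof (w_pos n).
    replace 1 with (INR (length (L n)) * w n) by (unfold w; field; lra).
    apply Rmult_le_compat_r; [lra|]. apply le_INR. lia.
Qed.

(* Lower bound.  A set of diameter d < T_0 fits, with a margin, into one
   cluster of a level n whose weight w_n is at most h(d) + e. *)
Lemma scale_for_diameter d e : 0 <= d -> d < T 0 -> 0 < e ->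
  exists n, d < T n /\ w n <= hgauge d + e.
Proof.
  intros Hd0 HdT He.
  destruct (classic (exists n, T (S n) <= d)) as [Hex|Hnex].
  - destruct (least_ex _ Hex) as [n0 [Hn0 Hmin]]. exists n0. split.
    + destruct n0 as [|n0]; [lra|]. apply Rnot_le_lt. apply Hmin. lia.
    + pose proof (hgauge_ge_w n0 d Hn0). lra.
  - destruct (w_small e He) as [n Hn]. exists n. split.
    + destruct n as [|n]; [lra|]. apply Rnot_le_lt. intro. apply Hnex. eauto.
    + pose proof (hgauge_nonneg d). lra.
Qed.

Definition captures (S : X -> Prop) (n : nat) (eta : R) (c : X) : Prop :=
  0 < eta /\ In c (L n) /\
  forall x, KS K x -> (exists y, S y /\ dist y x < eta) -> dist x c < T n / 8.

Lemma cover_set_captured (S : X -> Prop) d e : diam X S = Fin d -> d < T 0 -> 0 < e ->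
  exists n eta c, captures S n eta c /\ w n <= hgauge d + e.
Proof.
  intros Hd HdT He. pose proof (diam_nonneg X S d Hd).
  destruct (scale_for_diameter d e) as [n [Hn1 Hn2]]; auto.
  set (eta := (T n - d) / 3). assert (Heta : 0 < eta) by (unfold eta; lra).
  destruct (level_net n) as [_ [H2 _]].
  destruct (classic (exists x0, KS K x0 /\ exists y, S y /\ dist y x0 < eta))
    as [[x0 [Hx0 [y0 [Hy0 Hdy0]]]]|Hno].
  - destruct (H2 x0 Hx0) as [c [Hc Hdc]].
    exists n, eta, c. repeat split; auto.
    intros x Hx [y [Hy Hdy]]. destruct (H2 x Hx) as [c' [Hc' Hdc']].
    replace c with c'; auto.
    apply (same_center X (KS K) (T n) (L n) x x0); auto; [apply level_net|].
    pose proof (diam_pair X S d y y0 Hd Hy Hy0).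
    pose proof (dist_tri X x y x0). pose proof (dist_tri X y y0 x0). pose proof (dist_sym X x y).
    unfold eta in *. lra.
  - destruct (L_ne n) as [c Hc]. exists n, eta, c. repeat split; auto.
    intros x Hx Hy. exfalso. apply Hno. eauto.
Qed.

(* If finitely many clusters (n_i, c_i), i <= N, contain all of K then their
   weights add up to at least 1: count the points of a level below all of
   them, each cluster of level n_i containing exactly w_(n_i) |L_NB| of them. *)
Lemma cluster_weights_ge1 (nF : nat -> nat) (cF : nat -> X) N :
  (forall i, (i <= N)%nat -> In (cF i) (L (nF i))) ->
  (forall x, KS K x -> exists i, (i <= N)%nat /\ dist x (cF i) < T (nF i) / 8) ->
  1 <= sum_f_R0 (fun i => w (nF i)) N.
Proof.
  intros HcF Hcov.
  set (NB := fold_right (fun i acc => max (nF i) acc) 0%nat (seq 0 (S N))).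
  assert (HNB : forall i, (i <= N)%nat -> (nF i <= NB)%nat)
    by (intros i Hi; apply list_max_ge, in_seq; lia).
  assert (Hcount : INR (length (L NB)) <=
      sum_f_R0 (fun i => INR (length (filter (near X (T (nF i)) (cF i)) (L NB)))) N).
  { apply count_cover. intros b Hb. destruct (level_net NB) as [_ [_ [H3 _]]].
    destruct (H3 b Hb) as [x [Hx Hdx]]. destruct (Hcov x Hx) as [i [Hi Hxi]].
    exists i. split; auto. apply near_true.
    pose proof (T_anti (nF i) NB (HNB i Hi)). pose proof (T_pos NB).
    pose proof (dist_tri X b x (cF i)). pose proof (dist_sym X b x). lra. }
  replace 1 with (INR (length (L NB)) * w NB)
    by (unfold w; field; pose proof (INR_size_pos NB); lra).
  eapply Rle_trans; [apply Rmult_le_compat_r; [left; apply w_pos|exact Hcount]|].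
  rewrite Rmult_comm, scal_sum. right. apply sum_eq. intros i Hi.
  assert (HE : NB = (nF i + (NB - nF i))%nat) by (pose proof (HNB i Hi); lia).
  rewrite <- (w_descendants (nF i) (NB - nF i)), <- HE.
  replace (L NB) with (L (nF i + (NB - nF i))) by (f_equal; lia).
  rewrite descendants_count by auto. reflexivity.
Qed.

(* Every cover of K by sets of diameter <= T_0/2 has h-mass >= 1: enlarge the
   sets slightly into clusters, extract a finite subcover and count. *)
Lemma cover_sum_ge1 r : cover_sums X hgauge (T 0 / 2) (KS K) (Fin r) -> 1 <= r.
Proof.
  intros [C [Hcov [Hd Hv]]]. symmetry in Hv. pose proof (T_pos 0).
  assert (Hser := ER_series_ge _ (fun i => hgauge (diam_val X (C i))) r
                    (fun i => cover_term X hgauge (C i) _ (Hd i)) Hv).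
  apply Rnot_lt_le. intro Hr1. set (eps := (1 - r) / 2).
  assert (Hch : forall i, exists n eta c, captures (C i) n eta c /\
                  w n <= hgauge (diam_val X (C i)) + eps * (/2)^(S i)).
  { intro i. destruct (diam_val_spec X (C i) _ (Hd i)) as [Hdi Hdle].
    apply cover_set_captured; [auto|lra|]. pose proof (pow_lt (/2) (S i) ltac:(lra)).
    unfold eps. nra. }
  destruct (choice _ Hch) as [nF HnF]. destruct (choice _ HnF) as [eF HeF].
  destruct (choice _ HeF) as [cF HcF]. clear Hch HnF HeF.
  set (U := fun i x => exists y, C i y /\ dist y x < eF i).
  destruct (KS_cpt K nat U) as [Lidx HL].
  - intros i x [y [Hy Hdy]]. exists (eF i - dist y x). split; [lra|].
    intros z Hz. exists y. split; auto. pose proof (dist_tri X y x z). lra.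
  - intros x Hx. destruct (Hcov x Hx) as [i Hi]. exists i, x. rewrite dist_refl.
    split; auto. apply (HcF i).
  - set (nmax := fold_right (fun i acc => max i acc) 0%nat Lidx).
    assert (Hw : 1 <= sum_f_R0 (fun i => w (nF i)) nmax).
    { apply (cluster_weights_ge1 nF cF); [intros i _; apply (HcF i)|].
      intros x Hx. destruct (HL x Hx) as [i [Hi HU]]. exists i.
      split; [apply (list_max_ge nat (fun i => i)); auto|]. apply (HcF i); auto. }
    assert (Hw2 : sum_f_R0 (fun i => w (nF i)) nmax <=
                  sum_f_R0 (fun i => hgauge (diam_val X (C i))) nmax + eps).
    { eapply Rle_trans;
        [apply (sum_growing _ (fun i => hgauge (diam_val X (C i)) + eps * (/2)^(S i)));
         intro i; apply (HcF i)|].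
      rewrite plus_sum.
      replace (sum_f_R0 (fun i => eps * (/2)^(S i)) nmax)
        with (eps * sum_f_R0 (fun i => (/2)^(S i)) nmax)
        by (rewrite scal_sum; apply sum_eq; intros; ring).
      rewrite geo_sum. pose proof (pow_lt (/2) (S nmax) ltac:(lra)).
      assert (0 < eps) by (unfold eps; lra). nra. }
    pose proof (Hser nmax). unfold eps in *. lra.
Qed.

End Tower.

Lemma refinable_compact_gauge (X : MetricSpace) (K : KX X)
  (has_net : exists k l, cluster_net X (KS K) (dyadic k) l)
  (always_refinable : forall k l, cluster_net X (KS K) (dyadic k) l -> even_refinable X (KS K) k l) :
  exists h : R -> R, gauge h /\ continuous_nonneg h /\
    ER_lt (Fin 0) (Hh X h (KS K)) /\ ER_lt (Hh X h (KS K)) PInf.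
Proof.
  set (h := hgauge X K has_net always_refinable).
  exists h. split; [apply hgauge_is_gauge|split; [apply hgauge_cont|split]].
  - apply (Hh_positive X h (KS K) (T X K has_net always_refinable 0 / 2) 1); [|lra|].
    + pose proof (T_pos X K has_net always_refinable 0). lra.
    + apply cover_sum_ge1.
  - apply (Hh_finite X h (KS K) 1).
    apply Hh_delta_upper.
Qed.

(* Main theorem: the generic compact set is not of either nowhere dense kind,
   hence all its dyadic nets refine evenly. *)
Theorem mainTheorem2 (X : MetricSpace)
  (HX : polish_space X) (Hperf : perfect_space X) :
  generic_compact X (fun K => exists h : R -> R,
      gauge h /\ continuous_nonneg h /\
      ER_lt (Fin 0) (Hh X h K) /\ ER_lt (Hh X h K) PInf).
Proof.
  exists (fun n => match n with O => no_cluster_net X | S k => stuck_at X k end). split.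
  - intros [|k]; [apply no_cluster_net_nowhere_dense|apply stuck_nowhere_dense, Hperf].
  - intros K HnotP. apply NNPP. intro Hgood. apply HnotP, refinable_compact_gauge.
    + apply NNPP. intro Hnone. apply Hgood. exists 0%nat. intros k l Hl. apply Hnone. eauto.
    + intros k l Hl. apply NNPP. intro Hstuck. apply Hgood. exists (S k), l. split; auto.
Qed.
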